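(* Let $W$ be a normal PO-dilator and $X$ a partial order. Then the partial order $\mathcal T W(X)$ together with the functions $\iota_X$ and $\kappa_X$ forms a Kruskal fixed point of $W$ over $X$.
   Context: A quasi embedding between partial orders $X,Y$ is a function $f$ with $f(x)\leq_Y f(y)\Rightarrow x\leq_X y$; an embedding also satisfies the converse. $\mathrm{PO}$ is the category of partial orders and quasi embeddings. $[X]^{<\omega}$ denotes the finite subsets of $X$, with $[f]^{<\omega}(a)=\{f(x)\mid x\in a\}$; subsets of partial orders are regarded as suborders and $\iota_a$ denotes an inclusion map. A PO-dilator is a functor $W:\mathrm{PO}\to\mathrm{PO}$ mapping embeddings to embeddings, with a natural transformation $\operatorname{supp}^W:W\Rightarrow[\cdot]^{<\omega}$ such that for every embedding $f:X\to Y$, $\operatorname{rng}(W(f))=\{\sigma\in W(Y)\mid\operatorname{supp}^W_Y(\sigma)\subseteq\operatorname{rng}(f)\}$. For finite $a,b\subseteq X$, $a\leq^{\mathrm{fin}}_X b$ iff every $x\in a$ has some $y\in b$ with $x\leq_X y$ (for a single element $z$ write $z\leq^{\mathrm{fin}}_X b$ for $\{z\}\leq^{\mathrm{fin}}_X b$). $W$ is normal if $\sigma\leq_{W(X)}\tau$ implies $\operatorname{supp}^W_X(\sigma)\leq^{\mathrm{fin}}_X\operatorname{supp}^W_X(\tau)$. For $\sigma\in W(X)$ one writes $\sigma=_{\mathrm{NF}}W(\iota_a)(\sigma_0)$ if $a\in[X]^{<\omega}$, $\sigma_0\in W(a)$, $\sigma=W(\iota_a)(\sigma_0)$ and $\operatorname{supp}^W_a(\sigma_0)=a$;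 every $\sigma$ has exactly one such representation. For a normal PO-dilator $W$ and partial order $X$, the set $\mathcal T W(X)$ and relation $\leq_{\mathcal T W(X)}$ are defined by simultaneous recursion. Terms: (i) $\overline x$ for each $x\in X$; (ii) for each finite $a\subseteq\mathcal T W(X)$ on which the restriction of $\leq_{\mathcal T W(X)}$ is a partial order, and each $\sigma\in W(a)$ with $\operatorname{supp}^W_a(\sigma)=a$, a term $\circ(a,\sigma)$. Relation: $s\leq_{\mathcal T W(X)}t$ iff (i') $s=\overline x$, $t=\overline y$, $x\leq_X y$; or (ii') $t=\circ(b,\tau)$ and $s\leq_{\mathcal T W(X)}t'$ for some $t'\in b$; or (iii') $s=\circ(a,\sigma)$, $t=\circ(b,\tau)$, the restriction of $\leq_{\mathcal T W(X)}$ to $a\cup b$ is a partial order, and $W(\iota_a)(\sigma)\leq_{W(a\cup b)}W(\iota_b)(\tau)$ for the inclusions into $a\cup b$. (The recursion is along the length $l(\overline x)=0$, $l(\circ(a,\sigma))=1+\sum_{r\in a}2\,l(r)$.) The relation $\leq_{\mathcal T W(X)}$ is a partial order on $\mathcal T W(X)$. Define $\iota_X:X\to\mathcal T W(X)$ by $\iota_X(x)=\overline x$ and $\kappa_X:W(\mathcal T W(X))\to\mathcal T W(X)$ by $\kappa_X(\sigma)=\circ(a,\sigma_0)$ where $\sigma=_{\mathrm{NF}}W(\iota_a)(\sigma_0)$. A Kruskal fixed point of a normal PO-dilator $W$ over a partial order $X$ is a partial order $Z$ with functions $\iota:X\to Z$ and $\kappa:W(Z)\to Z$ such that $\operatorname{rng}(\iota)\cap\operatorname{rng}(\kappa)=\emptyset$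 and: $\iota(x)\leq_Z\iota(y)$ implies $x\leq_X y$; $\iota(x)\leq_Z\kappa(\tau)$ iff $\iota(x)\leq^{\mathrm{fin}}_Z\operatorname{supp}^W_Z(\tau)$; $\kappa(\sigma)\not\leq_Z\iota(y)$ for all $\sigma,y$; and $\kappa(\sigma)\leq_Z\kappa(\tau)$ iff ($\sigma\leq_{W(Z)}\tau$ or $\kappa(\sigma)\leq^{\mathrm{fin}}_Z\operatorname{supp}^W_Z(\tau)$), for all $x,y\in X$, $\sigma,\tau\in W(Z)$. *)

(* partial orders with Prop-valued relations on
   arbitrary types, since terms of T W(X) have no decidable equality. *)
From Stdlib Require Import List ProofIrrelevance.
Set Implicit Arguments.
Unset Strict Implicit.

Record po := PO {
  car :> Type;
  ple : car -> car -> Prop;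
  ple_refl : forall x, ple x x;
  ple_trans : forall x y z, ple x y -> ple y z -> ple x z;
  ple_anti : forall x y, ple x y -> ple y x -> x = y }.
Arguments ple {p} _ _.

Definition quasi_emb (X Y : po) (f : X -> Y) : Prop :=
  forall x y, ple (f x) (f y) -> ple x y.
Definition is_emb (X Y : po) (f : X -> Y) : Prop :=
  forall x y, ple (f x) (f y) <-> ple x y.

Record qemb (X Y : po) := QEmb { qfun :> X -> Y; qfunP : quasi_emb qfun }.

Definition qid (X : po) : qemb X X := @QEmb X X (fun x => x) (fun x y h => h).

Definition qcomp (X Y Z : po) (g : qemb Y Z) (f : qemb X Y) : qemb X Z :=
  @QEmb X Z (fun x => g (f x))
    (fun x y h => @qfunP X Y f x y (@qfunP Y Z g (f x) (f y) h)).

Definition finite (T : Type) (A : T -> Prop) : Prop :=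
  exists l : list T, forall x, A x -> In x l.

Definition is_po (T : Type) (R : T -> T -> Prop) : Prop :=
  (forall x, R x x) /\ (forall x y z, R x y -> R y z -> R x z) /\
  (forall x y, R x y -> R y x -> x = y).

Definition po_on (T : Type) (R : T -> T -> Prop) (A : T -> Prop) : Prop :=
  (forall x, A x -> R x x) /\
  (forall x y z, A x -> A y -> A z -> R x y -> R y z -> R x z) /\
  (forall x y, A x -> A y -> R x y -> R y x -> x = y).

Definition PO_of (T : Type) (R : T -> T -> Prop) (H : is_po R) : po :=
  @PO T R (proj1 H) (proj1 (proj2 H)) (proj2 (proj2 H)).

Definition subPO (T : Type) (R : T -> T -> Prop) (A : T -> Prop) (h : po_on R A) : po.
Proof.
  refine (@PO {x : T | A x} (fun u v => R (proj1_sig u) (proj1_sig v)) _ _ _).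
  - intros [x hx]; exact (proj1 h x hx).
  - intros [x hx] [y hy] [z hz]; exact (proj1 (proj2 h) x y z hx hy hz).
  - intros [x hx] [y hy] hxy hyx; simpl in *.
    apply subset_eq_compat; exact (proj2 (proj2 h) x y hx hy hxy hyx).
Defined.

Definition incl_sub (T : Type) (R : T -> T -> Prop) (A B : T -> Prop)
  (hA : po_on R A) (hB : po_on R B) (sAB : forall x, A x -> B x) :
  qemb (subPO hA) (subPO hB) :=
  @QEmb (subPO hA) (subPO hB)
    (fun u => exist B (proj1_sig u) (sAB _ (proj2_sig u)))
    (fun u v h => h).

Definition incl_top (T : Type) (R : T -> T -> Prop) (H : is_po R)
  (A : T -> Prop) (hA : po_on R A) : qemb (subPO hA) (PO_of H) :=
  @QEmb (subPO hA) (PO_of H) (fun u => proj1_sig u) (fun u v h => h).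

Record dilator := Dilator {
  Wo :> po -> po;
  Wm : forall X Y : po, qemb X Y -> qemb (Wo X) (Wo Y);
  Wm_id : forall (X : po) (s : Wo X), Wm (qid X) s = s;
  Wm_comp : forall (X Y Z : po) (f : qemb X Y) (g : qemb Y Z) (s : Wo X),
      Wm (qcomp g f) s = Wm g (Wm f s);
  Wm_emb : forall (X Y : po) (f : qemb X Y), is_emb f -> is_emb (Wm f);
  supp : forall X : po, Wo X -> X -> Prop;
  supp_fin : forall (X : po) (s : Wo X), finite (supp s);
  supp_nat : forall (X Y : po) (f : qemb X Y) (s : Wo X) (y : Y),
      supp (Wm f s) y <-> exists x, supp s x /\ f x = y;
  supp_rng : forall (X Y : po) (f : qemb X Y), is_emb f ->
      forall t : Wo Y, (exists s, Wm f s = t) <-> (forall y, supp t y -> exists x, f x = y) }.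
Arguments Wm d {X Y} _.
Arguments supp d {X} _ _.

Definition fin_le (Z : po) (a b : Z -> Prop) : Prop :=
  forall x, a x -> exists y, b y /\ ple x y.
Definition fin_le1 (Z : po) (z : Z) (b : Z -> Prop) : Prop :=
  fin_le (fun x => x = z) b.

Definition normal (W : dilator) : Prop :=
  forall (X : po) (s t : W X), ple s t -> fin_le (supp W s) (supp W t).

Definition kruskal_fp (W : dilator) (X Z : po) (iota : X -> Z) (kappa : W Z -> Z) : Prop :=
  (forall x s, iota x <> kappa s) /\
  (forall x y : X, ple (iota x) (iota y) -> ple x y) /\
  (forall x t, ple (iota x) (kappa t) <-> fin_le1 (iota x) (supp W t)) /\
  (forall s y, ~ ple (kappa s) (iota y)) /\
  (forall s t, ple (kappa s) (kappa t) <-> ple s t \/ fin_le1 (kappa s) (supp W t)).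

(** Rocq has no induction-recursion, so T W(X) (terms and the relation defined
  by simultaneous recursion) is specified by its defining clauses: a type of
  terms freely and well-foundedly generated by  bar x  and  circ(a, sigma),
  where  a  ranges over subsets on which the relation restricts to a partial
  order and  sigma  over elements of W(a) with support a, together with a
  relation satisfying exactly the clauses (i'),(ii'),(iii').  These clauses
  determine the terms and the relation uniquely up to isomorphism. *)

Record node_data (W : dilator) (T : Type) (R : T -> T -> Prop) := Node {
  nd_set : T -> Prop;
  nd_po : po_on R nd_set;
  nd_elt : W (subPO nd_po);
  nd_supp : forall u, supp W nd_elt u }.
Arguments nd_set {W T R} _ _.
Arguments nd_po {W T R} _.
Arguments nd_elt {W T R} _.

Definition union2 (T : Type) (A B : T -> Prop) : T -> Prop := fun x => A x \/ B x.

Record term_model (W : dilator) (X : po) := TermModel {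
  tm :> Type;
  tle : tm -> tm -> Prop;
  tbar : X -> tm;
  tnode : node_data W tle -> tm;
  tbar_inj : forall x y, tbar x = tbar y -> x = y;
  tnode_inj : forall d e, tnode d = tnode e -> d = e;
  tbar_node : forall x d, tbar x <> tnode d;
  tm_ind : forall P : tm -> Prop,
      (forall x, P (tbar x)) ->
      (forall d, (forall u, nd_set d u -> P u) -> P (tnode d)) ->
      forall t, P t;
  tle_def : forall s t, tle s t <->
      (exists x y, s = tbar x /\ t = tbar y /\ ple x y) \/
      (exists e, t = tnode e /\ exists u, nd_set e u /\ tle s u) \/
      (exists d e, s = tnode d /\ t = tnode e /\
         exists h : po_on tle (union2 (nd_set d) (nd_set e)),
           ple (Wm W (incl_sub (nd_po d) h (fun x hx => or_introl hx)) (nd_elt d))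
               (Wm W (incl_sub (nd_po e) h (fun x hx => or_intror hx)) (nd_elt e))) }.
Arguments tle {W X} _ _ _.
Arguments tbar {W X} _ _.
Arguments tnode {W X} _ _.
Arguments kruskal_fp W X Z iota kappa : clear implicits.

(* Every term of T W(X) has a finite height, and normality of W makes the
   height monotone along <=: a comparison circ(a, sigma) <= circ(b, tau) in
   W(a U b) puts every element of a below some element of b.  Hence
   circ(a, sigma) never lies below a member of a, which together with the
   recovery of sigma from its image in W(a U b) gives antisymmetry.
   Transitivity goes by induction on the height: for circ(a, rho) <=
   circ(b, sigma) <= circ(c, tau) the induction hypothesis makes <= a partial
   order on a U b U c, and both comparisons transport along the embeddings
   into W(a U b U c), where they compose.  Once <= is a partial order, the
   comparison in W(a U b) is the comparison of the images in W(T W(X)), and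
   every element of W(T W(X)) is such an image; the clauses of a Kruskal fixed
   point then restate the defining clauses of <=. *)
From Stdlib Require Import List ProofIrrelevance FunctionalExtensionality PropExtensionality Wf_nat Lia.
Set Implicit Arguments.
Unset Strict Implicit.

Lemma qemb_ext (X Y : po) (f g : qemb X Y) : (forall x, f x = g x) -> f = g.
Proof.
  destruct f as [f pf], g as [g pg]; simpl; intro E.
  assert (f = g) by (apply functional_extensionality; exact E); subst g.
  f_equal; apply proof_irrelevance.
Qed.

Lemma is_emb_inj (X Y : po) (f : X -> Y) : is_emb f -> forall x y, f x = f y -> x = y.
Proof.
  intros Hf x y E; apply ple_anti; apply Hf; rewrite E; apply ple_refl.
Qed.

Lemma Wm_comp_ext (W : dilator) (X Y Z : po) (f : qemb X Y) (g : qemb Y Z) (h : qemb X Z) :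
  (forall x, g (f x) = h x) -> forall s, Wm W g (Wm W f s) = Wm W h s.
Proof.
  intros E s; rewrite <- Wm_comp.
  replace h with (qcomp g f) by (apply qemb_ext; exact E); reflexivity.
Qed.

Section Inclusions.

Variables (W : dilator) (T : Type) (R : T -> T -> Prop).

Lemma incl_sub_emb (A B : T -> Prop) (hA : po_on R A) (hB : po_on R B) s :
  is_emb (incl_sub hA hB s).
Proof. intros x y; apply iff_refl. Qed.

Lemma incl_top_emb (H : is_po R) (A : T -> Prop) (hA : po_on R A) : is_emb (incl_top H hA).
Proof. intros x y; apply iff_refl. Qed.

Lemma po_on_sub (A B : T -> Prop) : (forall x, B x -> A x) -> po_on R A -> po_on R B.
Proof. intros s [r [t a]]; split; [|split]; eauto. Qed.

Lemma po_on_of_is_po (A : T -> Prop) : is_po R -> po_on R A.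
Proof. intros [r [t a]]; split; [|split]; eauto. Qed.

Lemma supp_incl_sub (A B : T -> Prop) (hA : po_on R A) (hB : po_on R B) s
  (σ : W (subPO hA)) (y : subPO hB) :
  (forall u, supp W σ u) -> supp W (Wm W (incl_sub hA hB s) σ) y <-> A (proj1_sig y).
Proof.
  intro Hσ; rewrite supp_nat; split.
  - intros [x [_ <-]]; exact (proj2_sig x).
  - intro Hy; exists (exist _ (proj1_sig y) Hy); split; [apply Hσ|].
    destruct y; apply subset_eq_compat; reflexivity.
Qed.

Lemma supp_incl_top (H : is_po R) (A : T -> Prop) (hA : po_on R A)
  (σ : W (subPO hA)) (y : PO_of H) :
  (forall u, supp W σ u) -> supp W (Wm W (incl_top H hA) σ) y <-> A y.
Proof.
  intro Hσ; rewrite supp_nat; split.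
  - intros [x [_ <-]]; exact (proj2_sig x).
  - intro Hy; exists (exist _ y Hy); split; [apply Hσ | reflexivity].
Qed.

End Inclusions.

Section NodeOrder.

Variables (W : dilator) (T : Type) (R : T -> T -> Prop).

Definition node_le (d e : node_data W R) : Prop :=
  exists h : po_on R (union2 (nd_set d) (nd_set e)),
    ple (Wm W (incl_sub (nd_po d) h (fun x hx => or_introl hx)) (nd_elt d))
        (Wm W (incl_sub (nd_po e) h (fun x hx => or_intror hx)) (nd_elt e)).

Lemma node_le_iff_emb (d e : node_data W R) (h : po_on R (union2 (nd_set d) (nd_set e)))
  (Z : po) (k : qemb (subPO h) Z) (f : qemb (subPO (nd_po d)) Z) (g : qemb (subPO (nd_po e)) Z) :
  is_emb k ->
  (forall u, k (incl_sub (nd_po d) h (fun x hx => or_introl hx) u) = f u) ->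
  (forall u, k (incl_sub (nd_po e) h (fun x hx => or_intror hx) u) = g u) ->
  node_le d e <-> ple (Wm W f (nd_elt d)) (Wm W g (nd_elt e)).
Proof.
  intros Hk Hf Hg.
  rewrite <- (Wm_comp_ext Hf), <- (Wm_comp_ext Hg), (Wm_emb Hk _ _).
  split.
  - intros [h' L]; replace h with h' by apply proof_irrelevance; exact L.
  - intro L; exists h; exact L.
Qed.

Lemma node_le_sub (d e : node_data W R) (U : T -> Prop) (hU : po_on R U)
  (sd : forall x, nd_set d x -> U x) (se : forall x, nd_set e x -> U x) :
  node_le d e <->
  ple (Wm W (incl_sub (nd_po d) hU sd) (nd_elt d)) (Wm W (incl_sub (nd_po e) hU se) (nd_elt e)).
Proof.
  assert (s : forall x, union2 (nd_set d) (nd_set e) x -> U x) by (intros x [hx|hx]; auto).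
  apply node_le_iff_emb with (h := po_on_sub s hU) (k := incl_sub _ hU s).
  - apply incl_sub_emb.
  - intros [u hu]; apply subset_eq_compat; reflexivity.
  - intros [u hu]; apply subset_eq_compat; reflexivity.
Qed.

Lemma node_le_top (H : is_po R) (d e : node_data W R) :
  node_le d e <->
  ple (Wm W (incl_top H (nd_po d)) (nd_elt d)) (Wm W (incl_top H (nd_po e)) (nd_elt e)).
Proof.
  apply node_le_iff_emb with (h := po_on_of_is_po _ H) (k := incl_top H _);
    [apply incl_top_emb | reflexivity | reflexivity].
Qed.

Lemma node_le_refl (d : node_data W R) : node_le d d.
Proof.
  apply (node_le_sub (nd_po d) (fun _ hx => hx) (fun _ hx => hx)), ple_refl.
Qed.

Lemma node_le_trans (c d e : node_data W R) (U : T -> Prop) (hU : po_on R U) :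
  (forall x, nd_set c x -> U x) -> (forall x, nd_set d x -> U x) ->
  (forall x, nd_set e x -> U x) ->
  node_le c d -> node_le d e -> node_le c e.
Proof.
  intros sc sd se Hcd Hde.
  apply (node_le_sub hU sc se); eapply ple_trans.
  - apply (node_le_sub hU sc sd), Hcd.
  - apply (node_le_sub hU sd se), Hde.
Qed.

Lemma node_eq_of_incl_eq (d e : node_data W R) (U : T -> Prop) (hU : po_on R U)
  (sd : forall x, nd_set d x -> U x) (se : forall x, nd_set e x -> U x) :
  Wm W (incl_sub (nd_po d) hU sd) (nd_elt d) = Wm W (incl_sub (nd_po e) hU se) (nd_elt e) ->
  d = e.
Proof.
  intro E.
  assert (Hsupp : forall y : subPO hU, nd_set d (proj1_sig y) <-> nd_set e (proj1_sig y)).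
  { intro y; rewrite <- (supp_incl_sub sd y (fun v => nd_supp v)),
      <- (supp_incl_sub se y (fun v => nd_supp v)), E; reflexivity. }
  assert (Eset : nd_set d = nd_set e).
  { apply functional_extensionality; intro u; apply propositional_extensionality.
    split; intro hu.
    - exact (proj1 (Hsupp (exist _ u (sd u hu))) hu).
    - exact (proj2 (Hsupp (exist _ u (se u hu))) hu). }
  destruct d as [a pa σ sa], e as [b pb τ sb]; simpl in *; subst b.
  assert (pb = pa) by apply proof_irrelevance; subst pb.
  replace se with sd in E by apply proof_irrelevance.
  apply (is_emb_inj (Wm_emb (incl_sub_emb hU sd))) in E; subst τ.
  replace sb with sa by apply proof_irrelevance; reflexivity.
Qed.

Lemma node_le_antisym (d e : node_data W R) : node_le d e -> node_le e d -> d = e.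
Proof.
  intros Hde Hed; destruct Hde as [h Lde].
  apply (node_eq_of_incl_eq (hU := h) (sd := fun x hx => or_introl hx)
    (se := fun x hx => or_intror hx)).
  apply ple_anti; [exact Lde|].
  apply (node_le_sub h (fun x hx => or_intror hx) (fun x hx => or_introl hx)), Hed.
Qed.

Lemma node_le_members (Hn : normal W) (d e : node_data W R) (s : T) :
  node_le d e -> nd_set d s -> exists u, nd_set e u /\ R s u.
Proof.
  intros [h L] hs.
  destruct (Hn _ _ _ L (exist _ s (or_introl hs))) as [[u hu] [Su Lu]].
  { apply supp_incl_sub; [apply nd_supp | exact hs]. }
  exists u; split; [|exact Lu].
  exact (proj1 (supp_incl_sub _ _ (fun v => nd_supp v)) Su).
Qed.

Lemma fin_le1_supp_top (H : is_po R) (d : node_data W R) (z : T) :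
  fin_le1 (z : PO_of H) (supp W (Wm W (incl_top H (nd_po d)) (nd_elt d))) <->
  exists u, nd_set d u /\ R z u.
Proof.
  split.
  - intro F; destruct (F z eq_refl) as [u [Su Lu]].
    exists u; split; [apply (supp_incl_top _ (fun v => nd_supp v)), Su | exact Lu].
  - intros [u [hu Lu]] x ->; exists u; split; [apply (supp_incl_top _ (fun v => nd_supp v)), hu | exact Lu].
Qed.

Lemma node_data_of (H : is_po R) (σ : W (PO_of H)) :
  exists d : node_data W R, Wm W (incl_top H (nd_po d)) (nd_elt d) = σ.
Proof.
  pose (A := fun x : T => supp W σ x).
  pose (hA := po_on_of_is_po A H).
  destruct (proj2 (supp_rng (@incl_top_emb _ _ H _ hA) σ)) as [σ0 E].
  { intros y hy; exists (exist _ y hy); reflexivity. }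
  assert (Hσ0 : forall u, supp W σ0 u).
  { intros [y hy]; pose proof hy as hy'; unfold A in hy'; rewrite <- E, supp_nat in hy'.
    destruct hy' as [[x hx] [Sx Ex]]; simpl in Ex; subst x.
    replace hy with hx by apply proof_irrelevance; exact Sx. }
  exists (@Node W T R A hA σ0 Hσ0); exact E.
Qed.

End NodeOrder.

Section Terms.

Variables (W : dilator) (X : po) (TW : term_model W X).

Lemma tm_cases (t : TW) : (exists x, t = tbar TW x) \/ (exists d, t = tnode TW d).
Proof. induction t using (tm_ind (t0 := TW)); eauto. Qed.

Lemma tle_bar_r (s : TW) (y : X) :
  tle TW s (tbar TW y) <-> exists x, s = tbar TW x /\ ple x y.
Proof.
  rewrite tle_def; split.
  - intros [[x [y' [-> [Ey Lxy]]]] | [[e [E _]] | [d [e [_ [E _]]]]]].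
    + apply tbar_inj in Ey; subst y'; eauto.
    + destruct (tbar_node E).
    + destruct (tbar_node E).
  - intros [x [-> Lxy]]; left; eauto.
Qed.

Lemma tle_node_r (s : TW) (e : node_data W (tle TW)) :
  tle TW s (tnode TW e) <->
  (exists u, nd_set e u /\ tle TW s u) \/ (exists d, s = tnode TW d /\ node_le d e).
Proof.
  rewrite tle_def; split.
  - intros [[x [y [_ [E _]]]] | [[e' [E Hu]] | [d [e' [-> [E Hde]]]]]].
    + symmetry in E; destruct (tbar_node E).
    + apply tnode_inj in E; subst e'; left; exact Hu.
    + apply tnode_inj in E; subst e'; right; exists d; split; [reflexivity | exact Hde].
  - intros [Hu | [d [-> Hde]]].
    + right; left; exists e; split; [reflexivity | exact Hu].
    + right; right; exists d, e; split; [|split]; [reflexivity | reflexivity | exact Hde].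
Qed.

Lemma tle_bar_bar (x y : X) : tle TW (tbar TW x) (tbar TW y) -> ple x y.
Proof.
  intro L; apply tle_bar_r in L; destruct L as [x' [E Lxy]].
  apply tbar_inj in E; subst x'; exact Lxy.
Qed.

Lemma node_not_le_bar (d : node_data W (tle TW)) (y : X) : ~ tle TW (tnode TW d) (tbar TW y).
Proof.
  intro L; apply tle_bar_r in L; destruct L as [x [E _]].
  symmetry in E; exact (tbar_node E).
Qed.

Lemma tle_bar_node (x : X) (e : node_data W (tle TW)) :
  tle TW (tbar TW x) (tnode TW e) <-> exists u, nd_set e u /\ tle TW (tbar TW x) u.
Proof.
  rewrite tle_node_r; split; [|now left].
  intros [Hu | [d [E _]]]; [exact Hu | destruct (tbar_node E)].
Qed.

Lemma tle_node_node (d e : node_data W (tle TW)) :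
  tle TW (tnode TW d) (tnode TW e) <->
  (exists u, nd_set e u /\ tle TW (tnode TW d) u) \/ node_le d e.
Proof.
  rewrite tle_node_r; split.
  - intros [Hu | [d' [E Hde]]]; [now left | apply tnode_inj in E; subst d'; now right].
  - intros [Hu | Hde]; [now left | right; eauto].
Qed.

Lemma tle_refl (t : TW) : tle TW t t.
Proof.
  destruct (tm_cases t) as [[x ->] | [d ->]].
  - apply tle_bar_r; exists x; split; [reflexivity | apply ple_refl].
  - apply tle_node_node; right; apply node_le_refl.
Qed.

(* A relation rather than a height function: terms only come with an induction
   principle into Prop. *)
Inductive height_le : TW -> nat -> Prop :=
| height_le_bar x n : height_le (tbar TW x) n
| height_le_node d n : (forall u, nd_set d u -> height_le u n) -> height_le (tnode TW d) (S n).

Lemma height_le_node_inv (d : node_data W (tle TW)) (n : nat) :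
  height_le (tnode TW d) n -> exists m, n = S m /\ forall u, nd_set d u -> height_le u m.
Proof.
  intro Hd; remember (tnode TW d) as t eqn:Et; destruct Hd as [x n | d' m Hu].
  - destruct (tbar_node Et).
  - apply tnode_inj in Et; subst d'; eauto.
Qed.

Lemma height_le_mono (t : TW) (n n' : nat) : height_le t n -> n <= n' -> height_le t n'.
Proof.
  intro Ht; revert n'; induction Ht as [x n | d m Hu IH]; intros n' Hle.
  - constructor.
  - destruct n' as [|n']; [lia|].
    constructor; intros u hu; apply IH; [exact hu | lia].
Qed.

Lemma height_le_exists (t : TW) : exists n, height_le t n.
Proof.
  induction t as [x | d IH] using (tm_ind (t0 := TW)).
  - exists 0; constructor.
  - destruct (supp_fin (nd_elt d)) as [l Hl].
    assert (Hbound : forall l' : list (subPO (nd_po d)),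
               exists m, forall u, In u l' -> height_le (proj1_sig u) m).
    { induction l' as [|u l' [m Hm]].
      - exists 0; intros u [].
      - destruct (IH _ (proj2_sig u)) as [k Hk].
        exists (k + m); intros v [<- | Hv].
        + apply (height_le_mono Hk); lia.
        + apply (height_le_mono (Hm v Hv)); lia. }
    destruct (Hbound l) as [m Hm]; exists (S m); constructor; intros u hu.
    apply (Hm (exist _ u hu)), Hl, nd_supp.
Qed.

Hypothesis Hn : normal W.

Lemma height_le_tle (s t : TW) (n : nat) : tle TW s t -> height_le t n -> height_le s n.
Proof.
  revert s n; induction t as [y | e IH] using (tm_ind (t0 := TW)); intros s n Lst Ht.
  - apply tle_bar_r in Lst; destruct Lst as [x [-> _]]; constructor.
  - destruct (height_le_node_inv Ht) as [m [-> Hu]].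
    apply tle_node_r in Lst; destruct Lst as [[u [hu Lsu]] | [d [-> Hde]]].
    + apply (height_le_mono (IH u hu s m Lsu (Hu u hu))); lia.
    + constructor; intros s' hs'.
      destruct (node_le_members Hn Hde hs') as [u [hu Lsu]].
      exact (IH u hu s' m Lsu (Hu u hu)).
Qed.

Lemma node_height_not_le_member (e : node_data W (tle TW)) (u : TW) :
  nd_set e u -> ~ (forall n, height_le u n -> height_le (tnode TW e) n).
Proof.
  intros hu Hle; destruct (height_le_exists u) as [n Hu]; revert Hu.
  induction n as [|n IHn]; intro Hu;
    destruct (height_le_node_inv (Hle _ Hu)) as [m [E Hm]]; try discriminate.
  injection E as <-; exact (IHn (Hm u hu)).
Qed.

Lemma tle_anti (s t : TW) : tle TW s t -> tle TW t s -> s = t.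
Proof.
  destruct (tm_cases s) as [[x ->] | [d ->]], (tm_cases t) as [[y ->] | [e ->]]; intros Lst Lts.
  - f_equal; apply ple_anti; apply tle_bar_bar; assumption.
  - destruct (node_not_le_bar Lts).
  - destruct (node_not_le_bar Lst).
  - f_equal; destruct (proj1 (tle_node_node d e) Lst) as [[u [hu Ldu]] | Hde].
    + destruct (node_height_not_le_member hu (fun n Hu => height_le_tle Lts (height_le_tle Ldu Hu))).
    + destruct (proj1 (tle_node_node e d) Lts) as [[u [hu Leu]] | Hed].
      * destruct (node_height_not_le_member hu (fun n Hu => height_le_tle Lst (height_le_tle Leu Hu))).
      * exact (node_le_antisym Hde Hed).
Qed.

Definition trans_at (n : nat) : Prop :=
  forall r s t : TW, height_le r n -> height_le s n -> height_le t n ->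
    tle TW r s -> tle TW s t -> tle TW r t.

Lemma po_on_of_trans_at (n : nat) (A : TW -> Prop) :
  trans_at n -> (forall x, A x -> height_le x n) -> po_on (tle TW) A.
Proof.
  intros Htrans HA; split; [|split].
  - intros x _; apply tle_refl.
  - intros x y z hx hy hz; apply Htrans; auto.
  - intros x y _ _; apply tle_anti.
Qed.

(* The outer hypothesis is needed only when all three terms are nodes: it makes
   <= a partial order on the union of their components. *)
Lemma trans_at_step (n : nat) : (forall m, m < n -> trans_at m) -> trans_at n.
Proof.
  intros IHn r s t Hr Hs Ht; revert r s Hr Hs Ht.
  induction t as [y | e IH] using (tm_ind (t0 := TW)); intros r s Hr Hs Ht Lrs Lst.
  - apply tle_bar_r in Lst; destruct Lst as [x [-> Lxy]].
    apply tle_bar_r in Lrs; destruct Lrs as [z [-> Lzx]].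
    apply tle_bar_r; exists z; split; [reflexivity | exact (ple_trans Lzx Lxy)].
  - destruct (height_le_node_inv Ht) as [m [-> He]].
    assert (He' : forall u, nd_set e u -> height_le u (S m))
      by (intros u hu; apply (height_le_mono (He u hu)); lia).
    apply tle_node_r in Lst; destruct Lst as [[u [hu Lsu]] | [d [-> Hde]]].
    { apply tle_node_r; left; exists u; split; [exact hu|].
      exact (IH u hu r s Hr Hs (He' u hu) Lrs Lsu). }
    destruct (height_le_node_inv Hs) as [m' [Em Hd]]; injection Em as <-.
    apply tle_node_r in Lrs; destruct Lrs as [[s' [hs' Lrs']] | [c [-> Hcd]]].
    + destruct (node_le_members Hn Hde hs') as [u [hu Ls'u]].
      apply tle_node_r; left; exists u; split; [exact hu|].
      refine (IH u hu r s' Hr _ (He' u hu) Lrs' Ls'u).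
      apply (height_le_mono (Hd s' hs')); lia.
    + destruct (height_le_node_inv Hr) as [m' [Em Hc]]; injection Em as <-.
      apply tle_node_r; right; exists c; split; [reflexivity|].
      pose (U := fun x => nd_set c x \/ nd_set d x \/ nd_set e x).
      assert (hU : po_on (tle TW) U).
      { apply (po_on_of_trans_at (n := m)); [apply IHn; lia|].
        intros x [hx | [hx | hx]]; auto. }
      apply (node_le_trans hU (fun x hx => or_introl hx) (fun x hx => or_intror (or_introl hx))
               (fun x hx => or_intror (or_intror hx)) Hcd Hde).
Qed.

Lemma tle_trans (r s t : TW) : tle TW r s -> tle TW s t -> tle TW r t.
Proof.
  destruct (height_le_exists r) as [i Hr], (height_le_exists s) as [j Hs],
    (height_le_exists t) as [k Ht].
  apply (lt_wf_ind (i + j + k) trans_at trans_at_step);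
    [apply (height_le_mono Hr) | apply (height_le_mono Hs) | apply (height_le_mono Ht)]; lia.
Qed.

Lemma tle_is_po : is_po (tle TW).
Proof. split; [exact tle_refl | split; [exact tle_trans | exact tle_anti]]. Qed.

End Terms.

Theorem theorem3p3 (W : dilator) (X : po) (TW : term_model W X) :
  normal W ->
  exists H : is_po (tle TW),
    forall kappa : W (PO_of H) -> PO_of H,
      (* kappa_X(sigma) = circ(a, sigma0) whenever sigma =_NF W(iota_a)(sigma0) *)
      (forall d : node_data W (tle TW),
          kappa (Wm W (incl_top H (nd_po d)) (nd_elt d)) = tnode TW d) ->
      kruskal_fp W X (PO_of H) (tbar TW) kappa.
Proof.
  intros Hn; exists (tle_is_po TW Hn); intros kappa Hk.
  split; [|split; [|split; [|split]]].
  - intros x s; destruct (node_data_of s) as [d <-]; rewrite Hk; apply tbar_node.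
  - exact (@tle_bar_bar W X TW).
  - intros x t; destruct (node_data_of t) as [e <-]; rewrite Hk, fin_le1_supp_top.
    apply tle_bar_node.
  - intros s y; destruct (node_data_of s) as [d <-]; rewrite Hk; apply node_not_le_bar.
  - intros s t; destruct (node_data_of s) as [d <-], (node_data_of t) as [e <-].
    rewrite !Hk, fin_le1_supp_top, <- node_le_top; simpl; rewrite tle_node_node; tauto.
Qed.
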